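(* Let $k=\mathbb Q(\sqrt m)$ be a real quadratic field in which the prime $p>2$ splits as $p=\mathfrak p_1\mathfrak p_2$, let $n\geq1$, and let $\alpha\in k^\times$ be prime to $p$ with $\mathrm N_{k/\mathbb Q}(\alpha)^{p-1}\equiv1\pmod{p^{n+1}}$. Then either $\delta_{\mathfrak p_1}(\alpha)=\delta_{\mathfrak p_2}(\alpha)$, or $\delta_{\mathfrak p_1}(\alpha)\geq n$ and $\delta_{\mathfrak p_2}(\alpha)\geq n$. Consequently, if $\alpha^{p-1}\not\equiv1\pmod{p^{n+1}}$, then $\alpha^{p-1}=1+p\cdot p^{\delta}\cdot\beta$ with $\delta=\delta_{\mathfrak p_1}(\alpha)=\delta_{\mathfrak p_2}(\alpha)<n$ and $\beta$ prime to $p$.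
   Context: For $x\in k^\times$ prime to $p$, $\delta_{\mathfrak p_j}(x)\geq0$ is defined by $\delta_{\mathfrak p_j}(x)+1=v_{\mathfrak p_j}(x^{p-1}-1)$. *)

(* the real quadratic field k = Q(sqrt m) is realized inside
   the algebraic numbers algC; O_k = k ∩ (algebraic integers). *)
From HB Require Import structures.
From mathcomp Require Import all_boot all_order all_algebra all_field.
Set Implicit Arguments.
Unset Strict Implicit.
Unset Printing Implicit Defensive.
Import Order.TTheory GRing.Theory Num.Theory.
Local Open Scope ring_scope.

Definition sqm (m : nat) : algC := sqrtC (m%:R).

Definition inK (w x : algC) : Prop := exists a b : rat, x = ratr a + ratr b * w.

Definition inO (w x : algC) : Prop := inK w x /\ x \in Aint.

Definition is_ideal (w : algC) (I : algC -> Prop) : Prop :=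
  [/\ (forall x, I x -> inO w x), I 0,
      (forall x y, I x -> I y -> I (x + y)) &
      (forall r x, inO w r -> I x -> I (r * x))].

Definition prime_ideal (w : algC) (I : algC -> Prop) : Prop :=
  [/\ is_ideal w I, ~ I 1 &
      (forall x y, inO w x -> inO w y -> I (x * y) -> I x \/ I y)].

Definition idmul (I J : algC -> Prop) (x : algC) : Prop :=
  exists s : seq (algC * algC),
    (forall q, q \in s -> I q.1 /\ J q.2) /\ x = \sum_(q <- s) q.1 * q.2.

Definition idpow (w : algC) (P : algC -> Prop) (e : nat) : algC -> Prop :=
  iter e (idmul P) (inO w).

Definition principal (w c : algC) (x : algC) : Prop := exists y, inO w y /\ x = c * y.

Definition splits_as (w : algC) (p : nat) (P1 P2 : algC -> Prop) : Prop :=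
  [/\ prime_ideal w P1, prime_ideal w P2, ~ (forall x, P1 x <-> P2 x) &
      (forall x, principal w p%:R x <-> idmul P1 P2 x)].

(* v_P(y) >= e, for y in k (e >= 0): y \in P^e O_{k,P},
   i.e. y = a/b with a \in P^e, b \in O_k \ P *)
Definition vge (w : algC) (P : algC -> Prop) (y : algC) (e : nat) : Prop :=
  exists a b, [/\ inO w a, inO w b, ~ P b, y = a / b & idpow w P e a].

Definition unit_at (w : algC) (P : algC -> Prop) (y : algC) : Prop :=
  [/\ y != 0, vge w P y 0 & vge w P y^-1 0].

(* delta_P(x) >= d, where delta_P(x) + 1 = v_P(x^(p-1) - 1)
   (delta = +oo when x^(p-1) = 1) *)
Definition delta_ge (w : algC) (p : nat) (P : algC -> Prop) (x : algC) (d : nat) : Prop :=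
  vge w P (x ^+ (p - 1) - 1) d.+1.

Definition delta_eq (w : algC) (p : nat) (P : algC -> Prop) (x : algC) (d : nat) : Prop :=
  forall d', delta_ge w p P x d' <-> (d' <= d)%N.

(* u = 1 mod p^e in k: u - 1 = p^e z with z p-integral (integral at P1, P2) *)
Definition kcong1 (w : algC) (P1 P2 : algC -> Prop) (p e : nat) (u : algC) : Prop :=
  exists z, [/\ vge w P1 z 0, vge w P2 z 0 & u - 1 = (p ^ e)%:R * z].

Definition ratcong1 (p e : nat) (q : rat) : Prop :=
  exists x y : int, ~~ (p %| `|y|)%N /\ q - 1 = (p ^ e)%:R * x%:~R / y%:~R.

From HB Require Import structures.
From mathcomp Require Import all_boot all_order all_algebra all_field.
From mathcomp Require Import ring.
From Stdlib Require Import ClassicalEpsilon Classical.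
Set Implicit Arguments.
Unset Strict Implicit.
Unset Printing Implicit Defensive.
Import Order.TTheory GRing.Theory Num.Theory.
Local Open Scope ring_scope.

(* Put u = alpha^(p-1) and let x' denote the conjugate of x in k.  Conjugation
   swaps P1 and P2, so v_P2(u - 1) = v_P1(u' - 1), and u u' = N(alpha)^(p-1)
   is 1 modulo P1^(n+1).  Since u' - 1 = (u u' - 1) - u' (u - 1) and
   symmetrically, v_P1(u - 1) and v_P1(u' - 1) coincide unless both are at
   least n + 1; this is the first claim.  Fermat's little theorem in
   O_k/P1 = F_p gives v_P1(u - 1) >= 1.  If u is not 1 mod p^(n+1), the common
   valuation delta + 1 is at most n, and dividing u - 1 by p^(delta+1) leaves
   a unit at P1 (multiply by a power of an element of P2 \ P1 and use
   P1 P2 = p O_k), hence, by conjugation, also at P2. *)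

Lemma int_bezout_prime (R : nzRingType) (p : nat) (z : int) :
  prime p -> ~~ (p %| z)%Z -> exists u v : int, u%:~R * z%:~R + v%:~R * p%:R = 1 :> R.
Proof.
move=> p_prime pNz; have [u [v huv]] := Bezoutz z p.
have gcd1 : gcdz z p = 1.
  by apply/eqP; rewrite -/(coprimez z p) coprimezE /= coprime_sym prime_coprime.
by exists u, v; rewrite -[p%:R]/((Posz p)%:~R) -!intrM -intrD huv gcd1.
Qed.

Lemma int_fermat (p : nat) (z : int) :
  prime p -> ~~ (p %| z)%Z -> (p %| z ^+ (p - 1) - 1)%Z.
Proof.
move=> p_prime pNz; have pcharFp := pchar_Fp p_prime.
rewrite (dvdz_pcharf pcharFp) rmorphB rmorphXn rmorph1 /= subr_eq0.
have x_neq0 : (z%:~R : 'F_p) != 0 by rewrite -(dvdz_pcharf pcharFp).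
apply/eqP; apply: (mulfI x_neq0); rewrite mulr1 -exprS subn1 prednK ?prime_gt0 //.
by have := expf_card (z%:~R : 'F_p); rewrite card_Fp.
Qed.

Lemma ex_threshold (Q : nat -> Prop) n :
  Q 1%N -> ~ Q n.+1 -> exists d, [/\ (d < n)%N, Q d.+1 & ~ Q d.+2].
Proof.
elim: n => [|n IHn] Q1 NQn //.
have [Qn|NQn'] := classic (Q n.+1); first by exists n.
by have [d [ltdn ? ?]] := IHn Q1 NQn'; exists d; split=> //; apply: ltnW.
Qed.

Section QuadraticField.
Variable m : nat.
Local Notation w := (sqm m).
Local Notation K := (inK w).
Local Notation O := (inO w).

Lemma sqm_sqr : w ^+ 2 = m%:R.
Proof. by rewrite /sqm sqrtCK. Qed.

Lemma inK_ratr q : K (ratr q).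
Proof. by exists q, 0; rewrite rmorph0 mul0r addr0. Qed.

Lemma inK_int (z : int) : K z%:~R.
Proof. by rewrite -(rmorph_int (@ratr algC)); apply: inK_ratr. Qed.

Lemma inK_nat k : K k%:R.
Proof. by rewrite -(rmorph_nat (@ratr algC)); apply: inK_ratr. Qed.

Lemma inK1 : K 1. Proof. exact: (inK_nat 1). Qed.

Lemma inKD x y : K x -> K y -> K (x + y).
Proof. by move=> [a [b ->]] [c [d ->]]; exists (a + c), (b + d); rewrite !rmorphD /=; ring. Qed.

Lemma inKN x : K x -> K (- x).
Proof. by move=> [a [b ->]]; exists (- a), (- b); rewrite !rmorphN /=; ring. Qed.

Lemma inKB x y : K x -> K y -> K (x - y).
Proof. by move=> Kx Ky; apply/inKD/inKN. Qed.

Lemma inKM x y : K x -> K y -> K (x * y).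
Proof.
move=> [a [b ->]] [c [d ->]]; exists (a * c + m%:R * b * d), (a * d + b * c).
by rewrite !rmorphD !rmorphM /= rmorph_nat -sqm_sqr; ring.
Qed.

Lemma inKX x k : K x -> K (x ^+ k).
Proof. by move=> Kx; elim: k => [|k IHk]; rewrite ?expr0 ?exprS; [apply: inK1|apply: inKM]. Qed.

Lemma inO_int (z : int) : O z%:~R.
Proof. by split; [apply: inK_int|apply: Aint_int]. Qed.

Lemma inO_nat k : O k%:R.
Proof. exact: (inO_int k). Qed.

Lemma inO1 : O 1. Proof. exact: (inO_nat 1). Qed.

Lemma inOD x y : O x -> O y -> O (x + y).
Proof. by move=> [? ?] [? ?]; split; [apply: inKD|apply: rpredD]. Qed.

Lemma inON x : O x -> O (- x).
Proof. by move=> [? ?]; split; [apply: inKN|rewrite rpredN]. Qed.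

Lemma inOB x y : O x -> O y -> O (x - y).
Proof. by move=> Ox Oy; apply/inOD/inON. Qed.

Lemma inOM x y : O x -> O y -> O (x * y).
Proof. by move=> [? ?] [? ?]; split; [apply: inKM|apply: rpredM]. Qed.

Lemma inOX x k : O x -> O (x ^+ k).
Proof. by move=> [? ?]; split; [apply: inKX|apply: rpredX]. Qed.

Lemma inO_ratr_int x q : O x -> x = ratr q -> exists z : int, x = z%:~R.
Proof. by move=> [_ x_Aint] xq; apply/intrP/Cint_rat_Aint; rewrite // xq Crat_rat. Qed.

Section Ideal.
Variable I : algC -> Prop.
Hypothesis I_ideal : is_ideal w I.

Lemma ideal_inO x : I x -> O x. Proof. by case: I_ideal => IO _ _ _; apply: IO. Qed.
Lemma ideal0 : I 0. Proof. by case: I_ideal. Qed.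
Lemma idealD x y : I x -> I y -> I (x + y). Proof. by case: I_ideal => _ _ ID _; apply: ID. Qed.
Lemma idealM r x : O r -> I x -> I (r * x). Proof. by case: I_ideal => _ _ _ IM; apply: IM. Qed.
Lemma idealMr x r : O r -> I x -> I (x * r). Proof. by rewrite mulrC; apply: idealM. Qed.

Lemma idealN x : I x -> I (- x).
Proof. by rewrite -mulN1r; apply/idealM/inON/inO1. Qed.

Lemma idealB x y : I x -> I y -> I (x - y).
Proof. by move=> Ix Iy; apply/idealD/idealN. Qed.

Lemma ideal_sum (T : eqType) (s : seq T) (f : T -> algC) :
  (forall q, q \in s -> I (f q)) -> I (\sum_(q <- s) f q).
Proof.
elim: s => [|q s IHs] Is; first by rewrite big_nil; apply: ideal0.
rewrite big_cons; apply: idealD; first by apply: Is; rewrite mem_head.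
by apply: IHs => r sr; apply: Is; rewrite in_cons sr orbT.
Qed.

Lemma notin_ideal_neq0 b : ~ I b -> b != 0.
Proof. by apply: contra_notN => /eqP ->; apply: ideal0. Qed.

End Ideal.

Lemma inO_ideal : is_ideal w O.
Proof. by split=> //; [exact: (inO_nat 0)|exact: inOD|exact: inOM]. Qed.

Lemma idmul_ideal I J : is_ideal w I -> is_ideal w J -> is_ideal w (idmul I J).
Proof.
move=> I_ideal J_ideal; split.
- move=> x [s [Is ->]]; apply: (ideal_sum inO_ideal) => q /Is [Iq1 Jq2].
  exact/inOM/(ideal_inO J_ideal Jq2)/(ideal_inO I_ideal Iq1).
- by exists [::]; rewrite big_nil.
- move=> x y [s [Is ->]] [t [It ->]]; exists (s ++ t); rewrite big_cat; split=> //.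
  by move=> q; rewrite mem_cat => /orP [/Is|/It].
- move=> r x Or [s [Is ->]]; exists [seq (r * q.1, q.2) | q <- s]; split.
    by move=> _ /mapP [q /Is [Iq1 Jq2] ->]; split=> //; apply: idealM.
  by rewrite big_map mulr_sumr; apply: eq_bigr => q _; rewrite mulrA.
Qed.

Lemma idmul_mul (I J : algC -> Prop) a b : I a -> J b -> idmul I J (a * b).
Proof. by move=> Ia Jb; exists [:: (a, b)]; rewrite big_seq1; split=> // q; rewrite inE => /eqP ->. Qed.

Lemma idmul_subl I J x : is_ideal w I -> (forall y, J y -> O y) -> idmul I J x -> I x.
Proof.
move=> I_ideal JO [s [Is ->]]; apply: (ideal_sum I_ideal) => q /Is [Iq1 Jq2].
exact/(idealMr I_ideal)/Iq1/JO.
Qed.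

Lemma idmul_subr I J x : (forall y, I y -> O y) -> is_ideal w J -> idmul I J x -> J x.
Proof.
move=> IO J_ideal [s [Is ->]]; apply: (ideal_sum J_ideal) => q /Is [Iq1 Jq2].
exact/(idealM J_ideal)/Jq2/IO.
Qed.

Lemma idpow_ideal P e : is_ideal w P -> is_ideal w (idpow w P e).
Proof. by move=> P_ideal; elim: e => [|e IHe]; [apply: inO_ideal|apply: idmul_ideal]. Qed.

Lemma idpow_le P e e' x : is_ideal w P -> (e' <= e)%N -> idpow w P e x -> idpow w P e' x.
Proof.
move=> P_ideal; elim: e => [|e IHe]; first by rewrite leqn0 => /eqP ->.
rewrite leq_eqVlt => /orP [/eqP -> //|/IHe le_e'e Px]; apply: le_e'e.
exact: (idmul_subr (ideal_inO P_ideal) (idpow_ideal e P_ideal)).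
Qed.

Section PrimeIdeal.
Variable P : algC -> Prop.
Hypothesis P_prime : prime_ideal w P.
Let P_ideal : is_ideal w P. Proof. by case: P_prime. Qed.

Lemma prime_notinM x y : O x -> O y -> ~ P x -> ~ P y -> ~ P (x * y).
Proof. by case: P_prime => _ _ PM Ox Oy NPx NPy /(PM _ _ Ox Oy) []. Qed.

Lemma prime_notinX x k : O x -> ~ P x -> ~ P (x ^+ k).
Proof.
move=> Ox NPx; elim: k => [|k IHk]; first by rewrite expr0; case: P_prime.
by rewrite exprS; apply: prime_notinM => //; apply: inOX.
Qed.

Lemma inO_vge0 y : O y -> vge w P y 0.
Proof. by move=> Oy; exists y, 1; rewrite divr1; split=> //; [apply: inO1|case: P_prime]. Qed.

Lemma vge_le y e e' : (e' <= e)%N -> vge w P y e -> vge w P y e'.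
Proof.
move=> le_e'e [a [b [Oa Ob NPb -> Pa]]]; exists a, b; split=> //.
exact: (idpow_le P_ideal le_e'e).
Qed.

Lemma vgeD y z e : vge w P y e -> vge w P z e -> vge w P (y + z) e.
Proof.
move=> [a [b [Oa Ob NPb -> Pa]]] [c [d [Oc Od NPd -> Pc]]].
have Pe_ideal := idpow_ideal e P_ideal.
exists (a * d + c * b), (b * d); split.
- exact/inOD/inOM/Ob/Oc/inOM.
- exact: inOM.
- exact: prime_notinM.
- by rewrite addf_div ?(notin_ideal_neq0 P_ideal) // [c * b]mulrC.
- exact/(idealD Pe_ideal)/(idealMr Pe_ideal)/Pc/Ob/(idealMr Pe_ideal).
Qed.

Lemma vgeN y e : vge w P y e -> vge w P (- y) e.
Proof.
move=> [a [b [Oa Ob NPb -> Pa]]]; exists (- a), b; rewrite mulNr; split=> //.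
- exact: inON.
- exact: (idealN (idpow_ideal e P_ideal)).
Qed.

Lemma vgeB y z e : vge w P y e -> vge w P z e -> vge w P (y - z) e.
Proof. by move=> Py Pz; apply/vgeD/vgeN. Qed.

Lemma vge0M y z e : vge w P y 0 -> vge w P z e -> vge w P (y * z) e.
Proof.
move=> [a [b [Oa Ob NPb -> Pa]]] [c [d [Oc Od NPd -> Pc]]].
exists (a * c), (b * d); rewrite mulf_div; split=> //; try exact: inOM.
- exact: prime_notinM.
- exact: (idealM (idpow_ideal e P_ideal)).
Qed.

Lemma vge0X y k : vge w P y 0 -> vge w P (y ^+ k) 0.
Proof.
move=> Py; elim: k => [|k IHk]; first by rewrite expr0; apply/inO_vge0/inO1.
by rewrite exprS; apply: vge0M.
Qed.

Lemma unit_atP y : unit_at w P y <->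
  exists a b, [/\ O a, O b, ~ P a, ~ P b & y = a / b].
Proof.
split=> [[y_neq0 [a [b [Oa Ob NPb ya _]]] [c [d [Oc Od NPd yc _]]]]|].
  exists a, b; split=> // Pa.
  have a_neq0 : a != 0 by apply: contraNneq y_neq0; rewrite ya => ->; rewrite mul0r.
  have ac_bd : a * c = b * d.
    have : y * y^-1 = 1 by rewrite mulfV.
    rewrite {1}ya yc mulf_div => /(congr1 (fun t => t * (b * d))).
    by rewrite mul1r divfK // mulf_neq0 // (notin_ideal_neq0 P_ideal).
  by apply: (prime_notinM Ob Od NPb NPd); rewrite -ac_bd; apply: (idealMr P_ideal).
move=> [a [b [Oa Ob NPa NPb ->]]].
have [a_neq0 b_neq0] := (notin_ideal_neq0 P_ideal NPa, notin_ideal_neq0 P_ideal NPb).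
split; first by rewrite mulf_neq0 ?invr_eq0.
- by exists a, b.
- by exists b, a; rewrite invf_div.
Qed.

Lemma vge_exact y d : vge w P y d.+1 -> ~ vge w P y d.+2 ->
  forall d', vge w P y d'.+1 <-> (d' <= d)%N.
Proof.
move=> Pyd NPyd d'; split=> [Pyd'|le_d'd]; last exact: vge_le Pyd.
by rewrite leqNgt; apply/negP => lt_dd'; apply: NPyd; apply: vge_le Pyd'.
Qed.

Lemma vge_sub1_cases x x' e :
  vge w P x 0 -> vge w P x' 0 -> vge w P (x * x' - 1) e ->
  (forall d, vge w P (x - 1) d <-> vge w P (x' - 1) d)
  \/ (vge w P (x - 1) e /\ vge w P (x' - 1) e).
Proof.
move=> Px Px' Pxx'.
have below d : (d <= e)%N -> vge w P (x - 1) d <-> vge w P (x' - 1) d.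
  move=> le_de; have Pxx'd := vge_le le_de Pxx'.
  split=> Pd.
  - have -> : x' - 1 = (x * x' - 1) - x' * (x - 1) by ring.
    exact/vgeB/vge0M.
  - have -> : x - 1 = (x * x' - 1) - x * (x' - 1) by ring.
    exact/vgeB/vge0M.
have [Pxe|NPxe] := classic (vge w P (x - 1) e); first by right; split=> //; apply/below.
left=> d; have [/below //|lt_ed] := leqP d e.
have NPx'e : ~ vge w P (x' - 1) e by move/(below _ (leqnn e)).
by split=> /(vge_le (ltnW lt_ed)).
Qed.

End PrimeIdeal.

Section Conjugation.
Hypothesis m_nsq : forall r : nat, (r * r != m)%N.

Lemma sqm_neq_ratr q : w != ratr q.
Proof.
apply/eqP => wq.
have q_Aint : ratr q \in Aint.
  apply: (@root_monic_Aint ('X^2 - (m%:R)%:P)).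
  - by rewrite rootE !hornerE -wq sqm_sqr subrr.
  - by rewrite monicXnsubC.
  - by rewrite polyOverXnsubC rpred_nat.
have /intrP [z qz] := Cint_rat_Aint (Crat_rat q) q_Aint.
have z_ge0 : (0 <= z)%R by rewrite -(ler0z algC) -qz -wq sqrtC_ge0 ler0n.
case: z z_ge0 qz => // r _ qz.
have /eqP := sqm_sqr; rewrite wq qz -[(Posz r)%:~R]/(r%:R) -natrX eqr_nat => /eqP rrm.
by move: (m_nsq r); rewrite -rrm mulnn eqxx.
Qed.

Lemma sqm_coord_inj a b c d :
  ratr a + ratr b * w = ratr c + ratr d * w -> a = c /\ b = d.
Proof.
move=> abcd; have bd : b = d.
  apply/eqP; apply: contraT => bNd.
  have bd_neq0 : ratr (b - d) != 0 :> algC by rewrite fmorph_eq0 subr_eq0.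
  have bdw : ratr (b - d) * w = ratr (c - a) :> algC.
    have c_eq : ratr c = ratr a + ratr b * w - ratr d * w :> algC by rewrite abcd; ring.
    by rewrite !rmorphB /= c_eq; ring.
  have : w = ratr ((c - a) / (b - d)) by rewrite fmorph_div /= -bdw mulrC mulKf.
  by move/eqP; rewrite (negbTE (sqm_neq_ratr _)).
by split=> //; subst d; apply: (fmorph_inj (@ratr algC)); move/addIr: abcd.
Qed.

(* The value outside k is irrelevant; on k the coordinates are unique by
   sqm_coord_inj, so kconj is the nontrivial automorphism of k. *)
Definition kconj (x : algC) : algC :=
  let ab := epsilon (inhabits ((0, 0) : rat * rat))
              (fun ab => x = ratr ab.1 + ratr ab.2 * w) in
  ratr ab.1 - ratr ab.2 * w.

Lemma kconjE a b : kconj (ratr a + ratr b * w) = ratr a - ratr b * w.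
Proof.
rewrite /kconj; set P := (fun ab : rat * rat => _).
have := epsilon_spec (inhabits ((0, 0) : rat * rat)) P (ex_intro _ (a, b) erefl).
by case: (epsilon _ _) => c d /= /sqm_coord_inj [-> ->].
Qed.

Lemma inK_kconj x : K (kconj x).
Proof. by eexists; eexists; rewrite /kconj -mulNr -rmorphN; reflexivity. Qed.

Lemma kconj_ratr q : kconj (ratr q) = ratr q.
Proof.
have -> : ratr q = ratr q + ratr 0 * w :> algC by rewrite rmorph0 mul0r addr0.
by rewrite kconjE rmorph0 mul0r subr0 addr0.
Qed.

Lemma kconj_nat k : kconj k%:R = k%:R.
Proof. by rewrite -(rmorph_nat (@ratr algC)) kconj_ratr. Qed.

Lemma kconj0 : kconj 0 = 0. Proof. exact: (kconj_nat 0). Qed.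
Lemma kconj1 : kconj 1 = 1. Proof. exact: (kconj_nat 1). Qed.

Lemma kconjK x : K x -> kconj (kconj x) = x.
Proof. by move=> [a [b ->]]; rewrite kconjE -mulNr -rmorphN kconjE rmorphN /=; ring. Qed.

Lemma kconjD x y : K x -> K y -> kconj (x + y) = kconj x + kconj y.
Proof.
move=> [a [b ->]] [c [d ->]].
have -> : ratr a + ratr b * w + (ratr c + ratr d * w)
   = ratr (a + c) + ratr (b + d) * w :> algC by rewrite !rmorphD /=; ring.
by rewrite !kconjE !rmorphD /=; ring.
Qed.

Lemma kconjN x : K x -> kconj (- x) = - kconj x.
Proof.
move=> [a [b ->]].
have -> : - (ratr a + ratr b * w) = ratr (- a) + ratr (- b) * w :> algC
  by rewrite !rmorphN /=; ring.
by rewrite !kconjE !rmorphN /=; ring.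
Qed.

Lemma kconjB x y : K x -> K y -> kconj (x - y) = kconj x - kconj y.
Proof. by move=> Kx Ky; rewrite kconjD ?kconjN //; apply: inKN. Qed.

Lemma kconjM x y : K x -> K y -> kconj (x * y) = kconj x * kconj y.
Proof.
move=> [a [b ->]] [c [d ->]].
have -> : (ratr a + ratr b * w) * (ratr c + ratr d * w)
   = ratr (a * c + m%:R * b * d) + ratr (a * d + b * c) * w :> algC
  by rewrite !rmorphD !rmorphM /= rmorph_nat -sqm_sqr; ring.
by rewrite !kconjE !rmorphD !rmorphM /= rmorph_nat -sqm_sqr; ring.
Qed.

Lemma kconjX x k : K x -> kconj (x ^+ k) = kconj x ^+ k.
Proof.
move=> Kx; elim: k => [|k IHk]; first by rewrite !expr0 kconj1.
by rewrite !exprS kconjM ?IHk //; apply: inKX.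
Qed.

Lemma kconj_eq0 x : K x -> (kconj x == 0) = (x == 0).
Proof. by move=> Kx; apply/eqP/eqP => [x'0|->]; [rewrite -(kconjK Kx) x'0|]; apply: kconj0. Qed.

Lemma mul_kconjE a b :
  (ratr a + ratr b * w) * kconj (ratr a + ratr b * w) = ratr (a ^+ 2 - m%:R * b ^+ 2).
Proof. by rewrite kconjE !(rmorphB, rmorphM, rmorphXn, rmorph_nat) /= -sqm_sqr; ring. Qed.

Lemma mul_kconj_ratr x : K x -> exists q : rat, x * kconj x = ratr q.
Proof. by move=> [a [b ->]]; eexists; apply: mul_kconjE. Qed.

Lemma add_kconj_ratr x : K x -> exists q : rat, x + kconj x = ratr q.
Proof. by move=> [a [b ->]]; exists (a *+ 2); rewrite kconjE rmorphMn /=; ring. Qed.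

Lemma inKV x : K x -> K x^-1.
Proof.
move=> Kx; have [->|x_neq0] := eqVneq x 0; first by rewrite invr0; apply: (inK_nat 0).
have [q xx'q] := mul_kconj_ratr Kx.
have -> : x^-1 = kconj x * ratr q^-1.
  by rewrite fmorphV /= -xx'q invfM mulrCA mulfV ?mulr1 // kconj_eq0.
exact/inKM/inK_ratr/inK_kconj.
Qed.

Lemma kconjV x : K x -> kconj x^-1 = (kconj x)^-1.
Proof.
move=> Kx; have [->|x_neq0] := eqVneq x 0; first by rewrite invr0 kconj0 invr0.
have x'x'V : kconj x * kconj x^-1 = 1 by rewrite -kconjM ?mulfV ?kconj1 //; apply: inKV.
by rewrite -[kconj x^-1]mul1r -(mulVf (x := kconj x)) ?kconj_eq0 // -mulrA x'x'V mulr1.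
Qed.

Lemma kconj_div x y : K x -> K y -> kconj (x / y) = kconj x / kconj y.
Proof. by move=> Kx Ky; rewrite kconjM ?kconjV //; apply: inKV. Qed.

Lemma kconj_natX k e : kconj (k%:R ^+ e) = k%:R ^+ e.
Proof. by rewrite -natrX kconj_nat. Qed.

Lemma kconj_div_natX x k e : K x -> kconj (x / k%:R ^+ e) = kconj x / k%:R ^+ e.
Proof. by move=> Kx; rewrite kconj_div ?kconj_natX //; apply/inKX/inK_nat. Qed.

Lemma kconj_sum (s : seq (algC * algC)) :
  (forall q, q \in s -> K q.1 /\ K q.2) ->
  K (\sum_(q <- s) q.1 * q.2) /\
  kconj (\sum_(q <- s) q.1 * q.2) = \sum_(q <- s) kconj q.1 * kconj q.2.
Proof.
elim: s => [|q s IHs] Ks; first by rewrite !big_nil kconj0; split=> //; apply: (inK_nat 0).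
have [Kq1 Kq2] := Ks q (mem_head _ _).
have [KS S'] : K (\sum_(q <- s) q.1 * q.2) /\
    kconj (\sum_(q <- s) q.1 * q.2) = \sum_(q <- s) kconj q.1 * kconj q.2.
  by apply: IHs => r sr; apply: Ks; rewrite in_cons sr orbT.
rewrite !big_cons; split; first exact/inKD/KS/inKM.
by rewrite kconjD ?kconjM ?S' //; apply: inKM.
Qed.

Lemma horner_kconj (q : {poly rat}) x : K x ->
  K (map_poly ratr q).[x] /\ kconj (map_poly ratr q).[x] = (map_poly ratr q).[kconj x].
Proof.
move=> Kx; elim/poly_ind: q => [|q c [Kqx qx']].
  by rewrite rmorph0 !horner0 kconj0; split=> //; apply: (inK_nat 0).
rewrite rmorphD rmorphM /= map_polyX map_polyC /= !hornerD !hornerMX !hornerC.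
split; first exact: (inKD (inKM Kqx Kx) (inK_ratr c)).
by rewrite (kconjD (inKM Kqx Kx) (inK_ratr c)) (kconjM Kqx Kx) qx' kconj_ratr.
Qed.

(* conjugates share the minimal polynomial *)
Lemma kconj_Aint x : K x -> x \in Aint -> kconj x \in Aint.
Proof.
move=> Kx x_Aint; have [q [Dq _] _] := minCpolyP x.
apply: (@root_monic_Aint (minCpoly x)) x_Aint; last exact: minCpoly_monic.
rewrite /root Dq -(horner_kconj q Kx).2 -Dq.
by move: (root_minCpoly x); rewrite /root => /eqP ->; rewrite kconj0.
Qed.

Lemma inO_kconj x : O x -> O (kconj x).
Proof. by move=> [Kx x_Aint]; split; [apply: inK_kconj|apply: kconj_Aint]. Qed.

Lemma add_kconj_int x : O x -> exists z : int, x + kconj x = z%:~R.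
Proof.
move=> Ox; have [q xq] := add_kconj_ratr Ox.1.
exact/(inO_ratr_int _ xq)/inOD/inO_kconj.
Qed.

Lemma mul_kconj_int x : O x -> exists z : int, x * kconj x = z%:~R.
Proof.
move=> Ox; have [q xq] := mul_kconj_ratr Ox.1.
exact/(inO_ratr_int _ xq)/inOM/inO_kconj.
Qed.

Definition conj_ideal (Q : algC -> Prop) (x : algC) : Prop := O x /\ Q (kconj x).

Lemma conj_ideal_prime Q : prime_ideal w Q -> prime_ideal w (conj_ideal Q).
Proof.
move=> [[QO Q0 QD QM] NQ1 QP]; split; first split.
- by move=> x [].
- by split; [apply: (inO_nat 0)|rewrite kconj0].
- move=> x y [Ox Qx] [Oy Qy]; split; first exact: inOD.
  by rewrite kconjD; [apply: QD|apply: Ox.1|apply: Oy.1].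
- move=> r x Or [Ox Qx]; split; first exact: inOM.
  by rewrite kconjM; [apply/QM/Qx/inO_kconj|apply: Or.1|apply: Ox.1].
- by rewrite /conj_ideal kconj1 => -[].
- move=> x y Ox Oy [_]; rewrite kconjM; [|apply: Ox.1|apply: Oy.1].
  by case/QP; try apply: inO_kconj => //; [left|right].
Qed.

Lemma conj_ideal_nat Q k : Q k%:R -> conj_ideal Q k%:R.
Proof. by split; [apply: inO_nat|rewrite kconj_nat]. Qed.

Section AboveP.
Variable p : nat.
Hypothesis p_prime : prime p.

Section PrimeAboveP.
Variable P : algC -> Prop.
Hypothesis P_prime : prime_ideal w P.
Hypothesis P_p : P p%:R.
Let P_ideal : is_ideal w P. Proof. by case: P_prime. Qed.

Lemma in_prime_intr z : P z%:~R <-> (p %| z)%Z.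
Proof.
split=> [Pz|/dvdzP [c ->]]; last first.
  by rewrite intrM; apply/(idealM P_ideal)/P_p/inO_int.
have [//|/(int_bezout_prime algC p_prime) [u [v uv1]]] := boolP (p %| z)%Z.
case: P_prime => _ NP1 _; exfalso; apply: NP1; rewrite -uv1.
exact/(idealD P_ideal)/(idealM P_ideal)/P_p/inO_int/(idealM P_ideal)/Pz/inO_int.
Qed.

(* Either the norm x x' is prime to p, or x' lies in P and then the trace
   x + x' cannot. *)
Lemma exists_inv_mod x : O x -> ~ P x -> exists y, O y /\ P (x * y - 1).
Proof.
move=> Ox NPx; have Ox' := inO_kconj Ox.
have [t xt] := add_kconj_int Ox; have [n xn] := mul_kconj_int Ox.
have [/dvdzP [c nc]|pNn] := boolP (p %| n)%Z.
  have Px' : P (kconj x).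
    have Pxx' : P (x * kconj x) by rewrite xn; apply/in_prime_intr/dvdzP; exists c.
    by case: P_prime => _ _ /(_ _ _ Ox Ox' Pxx') [/NPx|].
  have pNt : ~~ (p %| t)%Z.
    apply: contra_notN NPx => /in_prime_intr Pt.
    by rewrite -[x](addrK (kconj x)) xt; apply: (idealB P_ideal).
  have [u [v uv1]] := int_bezout_prime algC p_prime pNt.
  exists u%:~R; split; first exact: inO_int.
  have -> : x * u%:~R - 1 = - (v%:~R * p%:R) - kconj x * u%:~R.
    by rewrite -[X in _ - X = _]uv1 -xt; ring.
  exact/(idealB P_ideal)/(idealMr P_ideal)/Px'/inO_int/(idealN P_ideal)/(idealM P_ideal)/P_p/inO_int.
have [u [v uv1]] := int_bezout_prime algC p_prime pNn.
exists (kconj x * u%:~R); split; first exact/inOM/inO_int.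
have -> : x * (kconj x * u%:~R) - 1 = - (v%:~R * p%:R) by rewrite mulrA xn -[X in _ - X = _]uv1; ring.
exact/(idealN P_ideal)/(idealM P_ideal)/P_p/inO_int.
Qed.

Lemma prime_above_p_maximal Q : is_ideal w Q -> (forall x, P x -> Q x) -> ~ Q 1 ->
  forall x, Q x -> P x.
Proof.
move=> Q_ideal PQ NQ1 x Qx; apply: NNPP => NPx.
have [y [Oy Pxy]] := exists_inv_mod (ideal_inO Q_ideal Qx) NPx.
apply: NQ1; rewrite -[1](subKr (x * y)).
exact/(idealB Q_ideal)/PQ/Pxy/(idealMr Q_ideal)/Qx.
Qed.

Lemma prime_above_p_sep Q : prime_ideal w Q -> ~ (forall x, P x <-> Q x) ->
  exists x, P x /\ ~ Q x.
Proof.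
move=> [Q_ideal NQ1 _] NPQ; apply: NNPP => NPQ'; apply: NPQ => x.
have PQ y : P y -> Q y by move=> Py; apply: NNPP => NQy; apply: NPQ'; exists y.
by split; [apply: PQ|apply: prime_above_p_maximal].
Qed.

Lemma idpow_pX e : idpow w P e (p%:R ^+ e).
Proof. by elim: e => [|e IHe]; [apply: inO1|rewrite exprS; apply: idmul_mul]. Qed.

Lemma vge_mulpX y e : vge w P y 1 -> vge w P (y * p%:R ^+ e) e.+1.
Proof.
move=> [a [b [Oa Ob NPb -> Pa]]]; exists (a * p%:R ^+ e), b; split=> //.
- exact/inOM/inOX/inO_nat.
- by rewrite mulrAC.
- apply/idmul_mul/idpow_pX.
  exact: (idmul_subl P_ideal (ideal_inO inO_ideal)).
Qed.

Lemma vge_ratcong1 e q : ratcong1 p e q -> vge w P (ratr q - 1) e.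
Proof.
move=> [x [y [pNy qxy]]].
exists ((p ^ e)%:R * x%:~R), y%:~R; split.
- exact/inOM/inO_int/inO_nat.
- exact: inO_int.
- by move/in_prime_intr; rewrite dvdzE; apply/negP.
- have := congr1 (@ratr algC) qxy.
  by rewrite rmorphB rmorph1 fmorph_div rmorphM /= rmorph_nat !rmorph_int.
- by rewrite natrX; apply/(idealMr (idpow_ideal e P_ideal))/idpow_pX/inO_int.
Qed.

End PrimeAboveP.

Let pX_neq0 e : p%:R ^+ e != 0 :> algC.
Proof. by rewrite expf_neq0 // pnatr_eq0 -lt0n prime_gt0. Qed.

Section Split.
Variables P1 P2 : algC -> Prop.
Hypothesis P12_split : splits_as w p P1 P2.

Let P1_prime : prime_ideal w P1. Proof. by case: P12_split. Qed.
Let P2_prime : prime_ideal w P2. Proof. by case: P12_split. Qed.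
Let P1_ideal : is_ideal w P1. Proof. by case: P1_prime. Qed.
Let P2_ideal : is_ideal w P2. Proof. by case: P2_prime. Qed.

Lemma mul_in1_in2 x y : P1 x -> P2 y -> exists c, O c /\ x * y = p%:R * c.
Proof. by case: P12_split => _ _ _ P12E P1x P2y; apply/P12E/idmul_mul. Qed.

Let P12_p : idmul P1 P2 p%:R.
Proof. by case: P12_split => _ _ _ <-; exists 1; rewrite mulr1; split=> //; apply: inO1. Qed.

Let P1_p : P1 p%:R. Proof. exact: (idmul_subl P1_ideal (ideal_inO P2_ideal) P12_p). Qed.
Let P2_p : P2 p%:R. Proof. exact: (idmul_subr (ideal_inO P1_ideal) P2_ideal P12_p). Qed.

Lemma exists_in1_notin2 : exists x, P1 x /\ ~ P2 x.
Proof. by case: P12_split => _ _ NP12 _; apply: prime_above_p_sep. Qed.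

Lemma exists_in2_notin1 : exists x, P2 x /\ ~ P1 x.
Proof.
case: P12_split => _ _ NP12 _; apply: prime_above_p_sep => // P21.
by apply: NP12 => x; apply: iff_sym.
Qed.

Lemma prime_above_p_cases Q : prime_ideal w Q -> Q p%:R ->
  (forall x, Q x <-> P1 x) \/ (forall x, Q x <-> P2 x).
Proof.
move=> Q_prime Q_p; have Q_ideal : is_ideal w Q by case: Q_prime.
have [NQ1 QP] : ~ Q 1 /\ forall x y, O x -> O y -> Q (x * y) -> Q x \/ Q y.
  by case: Q_prime.
have [P1Q|NP1Q] := classic (forall x, P1 x -> Q x).
  by left=> x; split; [apply: (prime_above_p_maximal P1_prime)|apply: P1Q].
right; have [x NP1Qx] := not_all_ex_not _ _ NP1Q.
have [P1x NQx] := imply_to_and _ _ NP1Qx.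
have P2Q y : P2 y -> Q y.
  move=> P2y; have Qxy : Q (x * y).
    by have [c [Oc ->]] := mul_in1_in2 P1x P2y; apply: (idealMr Q_ideal).
  by case: (QP _ _ (ideal_inO P1_ideal P1x) (ideal_inO P2_ideal P2y) Qxy).
by move=> y; split; [apply: (prime_above_p_maximal P2_prime)|apply: P2Q].
Qed.

(* If conjugation fixed P1, then for s in P2 \ P1 the norm s s' would lie in
   P2, hence be divisible by p and lie in P1, forcing s or s' into P1. *)
Lemma in2_kconj x : K x -> P2 x <-> P1 (kconj x).
Proof.
move=> Kx.
have kconjP1E : forall y, conj_ideal P1 y <-> P2 y.
  have [kconjP1_P1|//] := prime_above_p_cases (conj_ideal_prime P1_prime) (conj_ideal_nat P1_p).
  have [s [P2s NP1s]] := exists_in2_notin1.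
  have Os := ideal_inO P2_ideal P2s; have [N sN] := mul_kconj_int Os.
  have P1N : P1 N%:~R.
    apply/(in_prime_intr P1_prime P1_p)/(in_prime_intr P2_prime P2_p).
    by rewrite -sN; apply: (idealMr P2_ideal) => //; apply: inO_kconj.
  rewrite -sN in P1N; case: P1_prime => _ _ /(_ _ _ Os (inO_kconj Os) P1N) [//|P1s'].
  by case: NP1s; apply/kconjP1_P1.
split=> [/kconjP1E [] //|P1x'].
apply/kconjP1E; split=> //; rewrite -(kconjK Kx).
exact/inO_kconj/(ideal_inO P1_ideal P1x').
Qed.

Lemma idpow2_kconj e x : K x -> idpow w P2 e x <-> idpow w P1 e (kconj x).
Proof.
elim: e x => [|e IHe] x Kx.
  by split=> [/inO_kconj //|/inO_kconj]; rewrite kconjK.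
have P1e_ideal := idpow_ideal e P1_ideal; have P2e_ideal := idpow_ideal e P2_ideal.
split=> [[s [Ps ->]]|[s [Ps x's]]].
  have Ks q : q \in s -> K q.1 /\ K q.2.
    by move=> /Ps [Pq1 Pq2]; split; [apply: (ideal_inO P2_ideal Pq1).1|apply: (ideal_inO P2e_ideal Pq2).1].
  exists [seq (kconj q.1, kconj q.2) | q <- s]; rewrite (kconj_sum Ks).2 big_map; split=> //.
  move=> _ /mapP [q sq ->] /=; have [Pq1 Pq2] := Ps _ sq; have [Kq1 Kq2] := Ks _ sq.
  by split; [apply/in2_kconj|apply/IHe].
have Ks q : q \in s -> K q.1 /\ K q.2.
  by move=> /Ps [Pq1 Pq2]; split; [apply: (ideal_inO P1_ideal Pq1).1|apply: (ideal_inO P1e_ideal Pq2).1].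
exists [seq (kconj q.1, kconj q.2) | q <- s]; split.
  move=> _ /mapP [q sq ->] /=; have [Pq1 Pq2] := Ps _ sq; have [Kq1 Kq2] := Ks _ sq.
  by split; [apply/(in2_kconj (inK_kconj _))|apply/(IHe _ (inK_kconj _))]; rewrite kconjK.
by rewrite -(kconjK Kx) x's (kconj_sum Ks).2 big_map.
Qed.

Lemma vge2_kconj e y : K y -> vge w P2 y e <-> vge w P1 (kconj y) e.
Proof.
move=> Ky; split=> [[a [b [Oa Ob NPb -> Pa]]]|[a [b [Oa Ob NPb y'ab Pa]]]].
  exists (kconj a), (kconj b); rewrite (kconj_div Oa.1 Ob.1).
  split=> //; try exact: inO_kconj.
  - by move/(in2_kconj Ob.1).
  - exact/idpow2_kconj/Pa/Oa.1.
exists (kconj a), (kconj b); split; try exact: inO_kconj.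
- by move/(in2_kconj (inK_kconj _)); rewrite kconjK //; apply: Ob.1.
- by rewrite -(kconjK Ky) y'ab (kconj_div Oa.1 Ob.1).
- by apply/(idpow2_kconj _ (inK_kconj _)); rewrite kconjK //; apply: Oa.1.
Qed.

Lemma unit_at2_kconj y : K y -> unit_at w P2 y <-> unit_at w P1 (kconj y).
Proof.
move=> Ky; have KyV := inKV Ky.
split=> [[y_neq0 P2y P2yV]|[y'_neq0 P1y' P1y'V]]; split.
- by rewrite kconj_eq0.
- exact/vge2_kconj.
- by rewrite -kconjV //; apply/vge2_kconj.
- by rewrite -(kconj_eq0 Ky).
- exact/vge2_kconj.
- by apply/(vge2_kconj _ KyV); rewrite kconjV.
Qed.

(* P1 P2 = p O_k: an element of P2 \ P1 trades each factor P1 for a factor p. *)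
Lemma idpow1_mul_in2 s e x : P2 s -> idpow w P1 e x ->
  exists c, O c /\ x * s ^+ e = p%:R ^+ e * c.
Proof.
move=> P2s; elim: e x => [|e IHe] x; first by exists x; rewrite !expr0 mulr1 mul1r.
move=> [t [Pt ->]]; elim: t Pt => [|q t IHt] Pt.
  by exists 0; rewrite big_nil mul0r mulr0; split=> //; apply: (inO_nat 0).
have [P1q1 P1q2] := Pt q (mem_head _ _).
have [c [Oc tc]] : exists c, O c /\ (\sum_(q <- t) q.1 * q.2) * s ^+ e.+1 = p%:R ^+ e.+1 * c.
  by apply: IHt => r tr; apply: Pt; rewrite in_cons tr orbT.
have [c1 [Oc1 qs]] := mul_in1_in2 P1q1 P2s.
have [c2 [Oc2 qse]] := IHe _ P1q2.
exists (c1 * c2 + c); split; first exact/inOD/Oc/inOM.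
rewrite big_cons mulrDl tc exprS.
have -> : q.1 * q.2 * (s * s ^+ e) = (q.1 * s) * (q.2 * s ^+ e) by ring.
by rewrite qs qse exprS; ring.
Qed.

Lemma vge1_divpX e y : vge w P1 y e -> vge w P1 (y / p%:R ^+ e) 0.
Proof.
move=> [a [b [Oa Ob NPb -> Pa]]]; have [s [P2s NP1s]] := exists_in2_notin1.
have [c [Oc asc]] := idpow1_mul_in2 P2s Pa.
have Os := ideal_inO P2_ideal P2s.
have [b_neq0 s_neq0] := (notin_ideal_neq0 P1_ideal NPb, notin_ideal_neq0 P1_ideal NP1s).
exists c, (b * s ^+ e); split=> //.
- exact/inOM/inOX.
- by apply: (prime_notinM P1_prime) => //; [apply: inOX|apply: (prime_notinX P1_prime)].
- have -> : c = a * s ^+ e / p%:R ^+ e by rewrite asc mulrC mulKf.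
  by field; rewrite pX_neq0 b_neq0 expf_neq0.
Qed.

Lemma unit_at1_divpX e y : vge w P1 y e -> ~ vge w P1 y e.+1 ->
  unit_at w P1 (y / p%:R ^+ e).
Proof.
move=> P1ye NP1ye; have [c [b [Oc Ob NPb ycb _]]] := vge1_divpX P1ye.
apply/(unit_atP P1_prime); exists c, b; split=> // P1c; apply: NP1ye.
rewrite -(divfK (pX_neq0 e) y) ycb; apply: (vge_mulpX P1_prime P1_p).
by exists c, b; split=> //; rewrite -[c]mulr1; apply/idmul_mul/inO1.
Qed.

(* Bezout with the trace of x in P1 \ P2 (whose conjugate is not in P1)
   expresses y modulo P1 by the integer trace of y x'. *)
Lemma residue1_int y : O y -> exists z : int, P1 (y - z%:~R).
Proof.
move=> Oy; have [x [P1x NP2x]] := exists_in1_notin2.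
have Ox := ideal_inO P1_ideal P1x; have Ox' := inO_kconj Ox.
have NP1x' : ~ P1 (kconj x) by move/(in2_kconj Ox.1).
have [t xt] := add_kconj_int Ox.
have pNt : ~~ (p %| t)%Z.
  apply: contra_notN NP1x' => /(in_prime_intr P1_prime P1_p) P1t.
  by rewrite -[kconj x](addKr x) xt; apply/(idealD P1_ideal)/P1t/(idealN P1_ideal).
have [u [v uv1]] := int_bezout_prime algC p_prime pNt.
have [T yx'T] := add_kconj_int (inOM Oy Ox').
exists (T * u); rewrite intrM -yx'T (kconjM Oy.1 (inK_kconj x)) (kconjK Ox.1).
have y_uv : y = y * (u%:~R * t%:~R + v%:~R * p%:R) by rewrite uv1 mulr1.
have -> : y - (y * kconj x + kconj y * x) * u%:~R
    = u%:~R * (y - kconj y) * x + y * v%:~R * p%:R by rewrite {1}y_uv -xt; ring.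
apply: (idealD P1_ideal); apply: (idealM P1_ideal) => //.
  exact: inOM (inO_int u) (inOB Oy (inO_kconj Oy)).
exact: inOM Oy (inO_int v).
Qed.

Lemma fermat1 y : O y -> ~ P1 y -> P1 (y ^+ (p - 1) - 1).
Proof.
move=> Oy NP1y; have [z P1yz] := residue1_int Oy.
have P1E := in_prime_intr P1_prime P1_p.
have pNz : ~~ (p %| z)%Z.
  apply: contra_notN NP1y => /P1E P1z.
  by rewrite -[y](subrK z%:~R); apply: (idealD P1_ideal).
have /P1E P1zp := int_fermat p_prime pNz.
have P1yzX k : P1 (y ^+ k - z%:~R ^+ k).
  elim: k => [|k IHk]; first by rewrite !expr0 subrr; apply: (ideal0 P1_ideal).
  have -> : y ^+ k.+1 - z%:~R ^+ k.+1
      = y * (y ^+ k - z%:~R ^+ k) + z%:~R ^+ k * (y - z%:~R) by rewrite !exprS; ring.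
  exact/(idealD P1_ideal)/(idealM P1_ideal)/P1yz/inOX/inO_int/(idealM P1_ideal).
have -> : y ^+ (p - 1) - 1 = (y ^+ (p - 1) - z%:~R ^+ (p - 1)) + (z ^+ (p - 1) - 1)%:~R.
  by rewrite rmorphB rmorphXn rmorph1 /=; ring.
exact: (idealD P1_ideal).
Qed.

Lemma vge1_fermat x : unit_at w P1 x -> vge w P1 (x ^+ (p - 1) - 1) 1.
Proof.
move/(unit_atP P1_prime) => [a [b [Oa Ob NPa NPb ->]]].
have b_neq0 := notin_ideal_neq0 P1_ideal NPb.
exists (a ^+ (p - 1) - b ^+ (p - 1)), (b ^+ (p - 1)); split.
- exact/inOB/inOX/Ob/inOX.
- exact: inOX.
- exact: (prime_notinX P1_prime).
- by rewrite expr_div_n; field; rewrite expf_neq0.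
- rewrite -[_ - _]mulr1; apply/idmul_mul/inO1.
  have -> : a ^+ (p - 1) - b ^+ (p - 1) = (a ^+ (p - 1) - 1) - (b ^+ (p - 1) - 1) by ring.
  exact/(idealB P1_ideal)/fermat1/NPb/Ob/fermat1.
Qed.

Lemma kcong1_vge e u : K u -> vge w P1 (u - 1) e -> vge w P2 (u - 1) e ->
  kcong1 w P1 P2 p e u.
Proof.
move=> Ku P1u P2u; have Ku1 := inKB Ku inK1.
exists ((u - 1) / p%:R ^+ e); split.
- exact: vge1_divpX.
- apply/vge2_kconj; first exact/inKM/inKV/inKX/inK_nat.
  by rewrite kconj_div_natX //; apply/vge1_divpX/vge2_kconj.
- by rewrite natrX mulrC divfK.
Qed.

Section Alpha.
Variables (a b : rat) (n : nat).
Local Notation alpha := (ratr a + ratr b * w).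
Local Notation u := (alpha ^+ (p - 1)).
Hypotheses (alpha1_unit : unit_at w P1 alpha) (alpha2_unit : unit_at w P2 alpha).
Hypothesis norm_cong : ratcong1 p n.+1 ((a ^+ 2 - m%:R * b ^+ 2) ^+ (p - 1)).

Let Ku : K u. Proof. by apply: inKX; exists a, b. Qed.

Let vge1_u : vge w P1 u 0.
Proof. by case: alpha1_unit => _ P1alpha _; apply: (vge0X P1_prime). Qed.

Let vge1_kconj_u : vge w P1 (kconj u) 0.
Proof. by case: alpha2_unit => _ P2alpha _; apply/vge2_kconj/(vge0X P2_prime). Qed.

Lemma delta2_kconjE d : delta_ge w p P2 alpha d <-> vge w P1 (kconj u - 1) d.+1.
Proof.
have -> : kconj u - 1 = kconj (u - 1) by rewrite (kconjB Ku inK1) kconj1.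
exact: vge2_kconj (inKB Ku inK1).
Qed.

Lemma vge1_norm_sub1 : vge w P1 (u * kconj u - 1) n.+1.
Proof.
have -> : u * kconj u = ratr ((a ^+ 2 - m%:R * b ^+ 2) ^+ (p - 1)).
  by rewrite kconjX -?exprMn ?mul_kconjE ?rmorphXn //; exists a, b.
exact: (vge_ratcong1 P1_prime P1_p).
Qed.

Lemma delta_cases :
  (forall d, delta_ge w p P1 alpha d <-> delta_ge w p P2 alpha d)
  \/ (delta_ge w p P1 alpha n /\ delta_ge w p P2 alpha n).
Proof.
case: (vge_sub1_cases P1_prime vge1_u vge1_kconj_u vge1_norm_sub1) => [uu'E|[P1u P1u']].
  by left=> d; apply: iff_trans (uu'E d.+1) (iff_sym (delta2_kconjE d)).
by right; split=> //; apply/delta2_kconjE.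
Qed.

Lemma delta_exact : ~ kcong1 w P1 P2 p n.+1 u ->
  exists (delta : nat) (beta : algC),
    [/\ (delta < n)%N,
        delta_eq w p P1 alpha delta /\ delta_eq w p P2 alpha delta,
        u = 1 + p%:R * (p ^ delta)%:R * beta,
        unit_at w P1 beta & unit_at w P2 beta].
Proof.
move=> Ncong.
have [uu'E NP1u] : (forall d, vge w P1 (u - 1) d <-> vge w P1 (kconj u - 1) d)
    /\ ~ vge w P1 (u - 1) n.+1.
  case: (vge_sub1_cases P1_prime vge1_u vge1_kconj_u vge1_norm_sub1) => [uu'E|[P1u P1u']].
    by split=> // P1u; apply/Ncong/kcong1_vge/delta2_kconjE/uu'E.
  by case: Ncong; apply/kcong1_vge/delta2_kconjE.
have [d [lt_dn P1d NP1d]] := ex_threshold (vge1_fermat alpha1_unit) NP1u.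
have [P1d' NP1d'] : vge w P1 (kconj u - 1) d.+1 /\ ~ vge w P1 (kconj u - 1) d.+2.
  by split=> [|/uu'E //]; apply/uu'E.
exists d, ((u - 1) / p%:R ^+ d.+1); split=> //.
- split; first exact: (vge_exact P1_prime P1d NP1d).
  by move=> d'; apply: iff_trans (delta2_kconjE d') (vge_exact P1_prime P1d' NP1d' d').
- by rewrite natrX -exprS [X in 1 + X]mulrC divfK // subrKC.
- exact: unit_at1_divpX.
- have Ku1 := inKB Ku inK1.
  apply/unit_at2_kconj; first exact: inKM Ku1 (inKV (inKX _ (inK_nat p))).
  by rewrite (kconj_div_natX _ _ Ku1) (kconjB Ku inK1) kconj1; apply: unit_at1_divpX.
Qed.

End Alpha.

End Split.

End AboveP.

End Conjugation.
End QuadraticField.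

Theorem lemma5p1 (m p n : nat) (P1 P2 : algC -> Prop) (a b : rat) :
  (1 < m)%N -> (forall r : nat, (r * r != m)%N) ->
  prime p -> (2 < p)%N ->
  splits_as (sqm m) p P1 P2 ->
  (1 <= n)%N ->
  let alpha : algC := ratr a + ratr b * sqm m in
  alpha != 0 ->
  unit_at (sqm m) P1 alpha -> unit_at (sqm m) P2 alpha ->
  ratcong1 p n.+1 ((a ^+ 2 - m%:R * b ^+ 2) ^+ (p - 1)) ->
  ((forall d, delta_ge (sqm m) p P1 alpha d <-> delta_ge (sqm m) p P2 alpha d)
   \/ (delta_ge (sqm m) p P1 alpha n /\ delta_ge (sqm m) p P2 alpha n))
  /\
  (~ kcong1 (sqm m) P1 P2 p n.+1 (alpha ^+ (p - 1)) ->
   exists (delta : nat) (beta : algC),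
     [/\ (delta < n)%N,
         delta_eq (sqm m) p P1 alpha delta /\ delta_eq (sqm m) p P2 alpha delta,
         alpha ^+ (p - 1) = 1 + p%:R * (p ^ delta)%:R * beta,
         unit_at (sqm m) P1 beta &
         unit_at (sqm m) P2 beta]).
Proof.
move=> _ m_nsq p_prime _ P12_split _ alpha _ alpha1_unit alpha2_unit norm_cong.
split; first exact: (delta_cases m_nsq p_prime P12_split alpha1_unit alpha2_unit norm_cong).
exact: (delta_exact m_nsq p_prime P12_split alpha1_unit alpha2_unit norm_cong).
Qed.
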